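(* Let $k$ be a field and let $\nu$ be the valuation on $k[x,y]$ given by $\nu(p)=\operatorname{ord}_t\, p\!\left(t,\sum_{i=1}^\infty t^{i^2}\right)$, the $t$-adic order of the power series obtained by substituting $x\mapsto t$, $y\mapsto t+t^4+t^9+t^{16}+\cdots$. Then $\nu$ is centered on $k[x,y]$, the set $\mathbf{Q}=\{x\}$ satisfies (GS3), but $\mathbf{Q}=\{x\}$ does not satisfy (GS2). In particular, the converse of the implication (GS2) $\Rightarrow$ (GS3) fails in general.
   Context: The substitution homomorphism $k[x,y]\to k[[t]]$, $x\mapsto t$, $y\mapsto\sum_{i\ge1}t^{i^2}$, is injective (the series is transcendental over $k(t)$), so $\nu$ is a valuation with $\nu(k^\times)=0$ and $\nu(t)=1$. For a valuation $\nu$ on a ring $R$ with values in $\Gamma\cup\{\infty\}$: $\nu(R)$ is its set of finite values; for $\gamma\in\nu(R)$, $\mathcal P_\gamma=\{f\mid\nu(f)\ge\gamma\}$, $\mathcal P_\gamma^+=\{f\mid\nu(f)>\gamma\}$; $\mathrm{gr}_\nu(R)=\bigoplus_{\gamma}\mathcal P_\gamma/\mathcal P_\gamma^+$ with multiplication induced by that of $R$; $\mathrm{in}_\nu(f)$ is the image of $f$ in $\mathcal P_{\nu(f)}/\mathcal P_{\nu(f)}^+$. $\nu$ is centered if $\nu\ge0$ on $R$; then $\mathfrak m=\{\nu>0\}$ and $\mathrm{gr}_\nu(R)$ is an $R/\mathfrak m$-algebra. For $\mathbf{Q}\subseteq R$, $\mathbf{Q}^\lambda=\prod Q^{\lambda(Q)}$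 for finitely supported $\lambda:\mathbf{Q}\to\mathbb{N}_0$. (GS2): for every $\gamma\in\nu(R)$ the ideal $\mathcal P_\gamma$ is generated by $\{\mathbf{Q}^\lambda\mid\nu(\mathbf{Q}^\lambda)\ge\gamma\}$. (GS3): $\{\mathrm{in}_\nu(Q)\mid Q\in\mathbf{Q}\}$ generates $\mathrm{gr}_\nu(R)$ as an $R/\mathfrak m$-algebra. *)

From HB Require Import structures.
From mathcomp Require Import all_boot all_order all_algebra.
From mathcomp Require Import mpoly.
From Stdlib Require Import ClassicalEpsilon.
Set Implicit Arguments. Unset Strict Implicit. Unset Printing Implicit Defensive.
Import Order.TTheory GRing.Theory Num.Theory.
Local Open Scope ring_scope.

(* ---------- Generic notions for a valuation v : R -> Gamma u {oo} ----------
   Gamma = int, and the value oo is represented by None. *)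
Section Generic.
Variable R : comNzRingType.
Variable v : R -> option int.

Definition val_ge (x : R) (g : int) : bool :=
  if v x is Some a then g <= a else true.
Definition val_gt (x : R) (g : int) : bool :=
  if v x is Some a then g < a else true.
Definition in_val_set (g : int) : Prop := exists x, v x = Some g.
Definition centered : Prop := forall x, val_ge x 0.
(* Q^lambda for a finitely supported lambda, written as the product of a
   finite list of elements of Q (with repetitions). *)
Definition mono (l : seq R) : R := \prod_(q <- l) q.

(* (GS2): for every g in nu(R), P_g is the ideal generated by
   { Q^lambda | nu(Q^lambda) >= g }. *)
Definition GS2 (Q : pred R) : Prop :=
  forall g, in_val_set g -> forall f : R,
    val_ge f g <->
    exists s : seq (R * seq R),
      all (fun c => all Q c.2 && val_ge (mono c.2) g) s /\
      f = \sum_(c <- s) c.1 * mono c.2.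

(* (GS3): { in_nu(Q) | Q in Q } generates gr_nu(R) as an R/m-algebra,
   written out componentwise: every homogeneous element of degree g,
   i.e. the class of some f \in P_g in P_g/P_g^+, is an R/m-linear
   combination of products of initial forms in_nu(Q^lambda) of degree g,
   i.e. f - sum a_i Q^lambda_i \in P_g^+. *)
Definition GS3 (Q : pred R) : Prop :=
  forall g, in_val_set g -> forall f : R,
    val_ge f g ->
    exists s : seq (R * seq R),
      all (fun c => all Q c.2 && (v (mono c.2) == Some g)) s /\
      val_gt (f - \sum_(c <- s) c.1 * mono c.2) g.
End Generic.

Section Nu.
Variable k : fieldType.

Definition sN (n : nat) : {poly k} := \sum_(1 <= i < n.+1) 'X^(i ^ 2).

(* n-th coefficient of the power series p(t, s(t)); since s = s_n mod t^(n+1),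
   it equals the n-th coefficient of the polynomial p(t, s_n(t)). *)
Definition subst_coef (p : {mpoly k[2]}) (n : nat) : k :=
  (mmap (fun c : k => c%:P) (fun i : 'I_2 => if val i == 0%N then 'X else sN n) p)`_n.

Definition ord_t (c : nat -> k) : option nat :=
  match excluded_middle_informative (exists n, c n != 0) with
  | left H => Some (@ex_minn (fun n => c n != 0) H)
  | right _ => None
  end.

Definition nu (p : {mpoly k[2]}) : option int :=
  omap (fun n : nat => n%:Z) (ord_t (subst_coef p)).
End Nu.

From HB Require Import structures.
From mathcomp Require Import all_boot all_order all_algebra.
From mathcomp Require Import mpoly.
From Stdlib Require Import ClassicalEpsilon.
Set Implicit Arguments. Unset Strict Implicit. Unset Printing Implicit Defensive.
Import Order.TTheory GRing.Theory Num.Theory.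
Local Open Scope ring_scope.

(* Since nu(x^m) = m, every degree m of gr_nu is spanned by in_nu(x^m): an f
   with nu(f) >= m differs from (coefficient of t^m in f(t, s)) * x^m by an
   element of value > m, which gives (GS3).  On the other hand nu(y) = 1, and
   the only products of elements of Q of value >= 1 are the x^m with m > 0;
   these all vanish at (x, y) = (0, 1) whereas y does not, so y is not in the
   ideal they generate and (GS2) fails for the value 1. *)

Lemma val_gtE (R : comNzRingType) (v : R -> option int) x g :
  val_gt v x g = val_ge v x (g + 1).
Proof. by rewrite /val_gt /val_ge; case: (v x) => // a; rewrite lezD1. Qed.

Lemma mono_pred1 (R : comNzRingType) (a : R) (l : seq R) :
  all (pred1 a) l -> mono l = a ^+ size l.
Proof.
rewrite /mono; elim: l => [|b l IHl]; first by rewrite big_nil expr0.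
by move=> /= /andP[/eqP -> /IHl]; rewrite big_cons exprS => ->.
Qed.

Lemma X1_notin_ideal_X0 (R : comNzRingType)
    (s : seq ({mpoly R[2]} * seq {mpoly R[2]})) :
  all (fun c => all (pred1 'X_0) c.2 && (0 < size c.2)%N) s ->
  'X_1 != \sum_(c <- s) c.1 * mono c.2.
Proof.
move=> X0_powers; pose at01 : 'I_2 -> R := fun i => if val i == 0%N then 0 else 1.
apply: contra_neq (@oner_neq0 R) => E.
have := congr1 (meval at01) E.
rewrite mevalXU (big_morph _ (@mevalD _ _ at01) (meval0 _)).
rewrite big1_seq // => c /(allP X0_powers)/andP[/mono_pred1 -> size_gt0].
have at01_0 : at01 0 = 0 by [].
by rewrite mevalM rmorphXn /= mevalXU at01_0 -(prednK size_gt0) exprS mul0r mulr0.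
Qed.

Section OrderOfSequence.
Variable k : fieldType.
Implicit Types c : nat -> k.

Lemma ord_t_SomeE c m :
  ord_t c = Some m -> c m != 0 /\ forall n, (n < m)%N -> c n = 0.
Proof.
rewrite /ord_t; case: excluded_middle_informative => // c_nz [<-].
case: ex_minnP => j cj_nz j_min; split => // n; apply: contraTeq => cn_nz.
by rewrite -leqNgt j_min.
Qed.

Lemma ord_t_NoneE c : ord_t c = None -> forall n, c n = 0.
Proof.
rewrite /ord_t; case: excluded_middle_informative => // c0 _ n.
by apply/eqP/negPn/negP => cn_nz; apply: c0; exists n.
Qed.

Lemma ord_t_first_nonzero c m :
  c m != 0 -> (forall n, (n < m)%N -> c n = 0) -> ord_t c = Some m.
Proof.
move=> cm_nz cm_min; case E: (ord_t c) => [j|]; last first.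
  by rewrite (ord_t_NoneE E) eqxx in cm_nz.
have [cj_nz cj_min] := ord_t_SomeE E; congr Some; apply/eqP; rewrite eqn_leq.
apply/andP; split; rewrite leqNgt.
  by apply: contraNN cm_nz => /cj_min ->.
by apply: contraNN cj_nz => /cm_min ->.
Qed.

End OrderOfSequence.

Section SubstitutionValuation.
Variable k : fieldType.
Implicit Types p : {mpoly k[2]}.

Definition subst_trunc n : {mpoly k[2]} -> {poly k} :=
  mmap (@polyC k) (fun i : 'I_2 => if val i == 0%N then 'X else sN k n).

HB.instance Definition _ n := GRing.RMorphism.on (subst_trunc n).

Lemma subst_coefE p n : subst_coef p n = (subst_trunc n p)`_n.
Proof. by []. Qed.

Lemma subst_trunc_C n a : subst_trunc n a%:MP = a%:P.
Proof. exact: mmapC. Qed.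

Lemma subst_trunc_X0n n m : subst_trunc n ('X_0 ^+ m) = 'X^m.
Proof. by rewrite rmorphXn /= /subst_trunc mmapX mmap1U. Qed.

Lemma subst_trunc_X1 n : subst_trunc n 'X_1 = sN k n.
Proof. by rewrite /subst_trunc mmapX mmap1U. Qed.

Lemma nu_geP p (m : nat) :
  val_ge (@nu k) p m <-> forall n, (n < m)%N -> subst_coef p n = 0.
Proof.
rewrite /val_ge /nu; case E: (ord_t _) => [j|] /=; last first.
  by split => // _ n _; apply: ord_t_NoneE.
have [cj_nz cj_min] := ord_t_SomeE E; rewrite lez_nat; split.
  by move=> le_mj n lt_nm; apply: cj_min; apply: leq_trans le_mj.
by move=> cm_min; rewrite leqNgt; apply: contraNN cj_nz => /cm_min ->.
Qed.

Lemma nu_gtP p (m : nat) :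
  val_gt (@nu k) p m <-> forall n, (n <= m)%N -> subst_coef p n = 0.
Proof. by rewrite val_gtE -PoszD addn1 nu_geP. Qed.

Lemma nu_X0n m : @nu k ('X_0 ^+ m) = Some (Posz m).
Proof.
rewrite /nu (@ord_t_first_nonzero _ _ m) //.
  by rewrite subst_coefE subst_trunc_X0n coefXn eqxx oner_neq0.
by move=> n lt_nm; rewrite subst_coefE subst_trunc_X0n coefXn (ltn_eqF lt_nm).
Qed.

Lemma nu_X1_ge1 : val_ge (@nu k) 'X_1 1.
Proof.
apply/(nu_geP _ 1) => n; rewrite ltnS leqn0 => /eqP ->.
by rewrite subst_coefE subst_trunc_X1 /sN big_geq // coef0.
Qed.

Lemma in_val_set_nu g : in_val_set (@nu k) g -> exists m : nat, g = m.
Proof. by case=> p; rewrite /nu; case: (ord_t _) => //= j [<-]; exists j. Qed.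

Lemma nu_centered : centered (@nu k).
Proof. by move=> p; apply/(nu_geP p 0). Qed.

Lemma nu_GS3_X0 : GS3 (@nu k) (pred1 'X_0).
Proof.
move=> g /in_val_set_nu[m ->] f /nu_geP f_ge.
have X0s : all (pred1 ('X_0 : {mpoly k[2]})) (nseq m 'X_0).
  by rewrite all_nseq /= eqxx orbT.
exists [:: ((subst_coef f m)%:MP, nseq m 'X_0)]; split.
  by rewrite /= X0s (mono_pred1 X0s) size_nseq nu_X0n eqxx.
apply/nu_gtP => n le_nm; rewrite big_seq1 /= (mono_pred1 X0s) size_nseq.
rewrite subst_coefE rmorphB rmorphM /= subst_trunc_C subst_trunc_X0n.
rewrite coefB coefCM coefXn -subst_coefE.
have [->|ne_nm] := eqVneq n m; first by rewrite mulr1 subrr.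
by rewrite f_ge ?mulr0 ?subr0 // ltn_neqAle ne_nm.
Qed.

Lemma nu_not_GS2_X0 : ~ GS2 (@nu k) (pred1 'X_0).
Proof.
move=> GS2_X0.
have val1 : in_val_set (@nu k) 1 by exists ('X_0 ^+ 1); rewrite nu_X0n.
have [s [gens_ge1 E]] := (GS2_X0 1 val1 'X_1).1 nu_X1_ge1.
move: E; apply/eqP; apply: X1_notin_ideal_X0.
apply/allP => c /(allP gens_ge1) /andP[X0s]; rewrite X0s (mono_pred1 X0s).
by rewrite /val_ge nu_X0n lez_nat.
Qed.

End SubstitutionValuation.

Theorem mainTheorem2 (k : fieldType) :
  centered (@nu k) /\
  GS3 (@nu k) (pred1 ('X_0 : {mpoly k[2]})) /\
  ~ GS2 (@nu k) (pred1 ('X_0 : {mpoly k[2]})).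
Proof.
split; first exact: nu_centered.
by split; [exact: nu_GS3_X0 | exact: nu_not_GS2_X0].
Qed.
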